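(* Let $G$ be a graph with at least two edges, $G\ne 2K_2$, and with maximum degree at most $2$. Then, as $n\to\infty$, $$f(n,\mathcal{B}(G))\ge \frac{2^{n-1}}{|E(G)|-1}(1-o(1)).$$
   Context: $2K_2$ is the graph consisting of two disjoint edges. For a graph $G$, a hypergraph $H$ is a Berge-$G$ hypergraph if there are an injective map $\phi:V(G)\to V(H)$ and pairwise distinct hyperedges $e_{xy}\in E(H)$, one for each $xy\in E(G)$, with $\phi(x),\phi(y)\in e_{xy}$. $\mathcal{B}(G)$ denotes the family of all Berge-$G$ hypergraphs. For a positive integer $n$ and a graph $G$, $f(n,\mathcal{B}(G))$ is the smallest number of colors in a coloring of all subsets of $[n]=\{1,\dots,n\}$ (i.e. of $2^{[n]}$) such that there is no monochromatic Berge-$G$ hypergraph, i.e. no color class, viewed as a (non-uniform) hypergraph on $[n]$, contains a Berge-$G$ subhypergraph. *)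

From HB Require Import structures.
From mathcomp Require Import all_boot all_order all_algebra.
Set Implicit Arguments. Unset Strict Implicit. Unset Printing Implicit Defensive.

(* A finite simple graph: vertex type V : finType, adjacency e : rel V,
   assumed symmetric and irreflexive (hypotheses of the theorem). *)

Definition edges (V : finType) (e : rel V) : {set {set V}} :=
  [set [set x; y] | x in V, y in V & e x y].

Definition max_deg_le (V : finType) (e : rel V) (d : nat) : Prop :=
  forall x : V, #|[set y | e x y]| <= d.

Definition twoK2 : rel 'I_4 :=
  fun a b => [|| ((a : nat) == 0) && ((b : nat) == 1),
                 ((a : nat) == 1) && ((b : nat) == 0),
                 ((a : nat) == 2) && ((b : nat) == 3) |
                 ((a : nat) == 3) && ((b : nat) == 2)].

Definition graph_iso (V W : finType) (e : rel V) (e' : rel W) : Prop :=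
  exists f : V -> W, bijective f /\ forall x y, e' (f x) (f y) = e x y.

(* The hypergraph (family of subsets of [n] = 'I_n) given by the color class
   [set A | c A == i] contains a Berge-G subhypergraph: an injective vertex
   map phi and pairwise distinct hyperedges psi(xy) of that color, one per edge
   xy of G, with phi x, phi y in psi(xy). *)
Definition has_mono_berge (V : finType) (e : rel V) (n k : nat)
    (c : {set 'I_n} -> 'I_k) : Prop :=
  exists (i : 'I_k) (phi : V -> 'I_n) (psi : {set V} -> {set 'I_n}),
    injective phi /\
    {in edges e &, injective psi} /\
    (forall x y, e x y ->
       [/\ phi x \in psi [set x; y], phi y \in psi [set x; y]
         & c (psi [set x; y]) = i]).

(* A k-coloring of 2^[n] with no monochromatic Berge-G. f(n, B(G)) is the
   least k for which such a coloring exists. *)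
Definition berge_free_coloring (V : finType) (e : rel V) (n k : nat)
    (c : {set 'I_n} -> 'I_k) : Prop :=
  ~ has_mono_berge e c.

From HB Require Import structures.
From mathcomp Require Import all_boot all_order all_algebra.
From mathcomp Require Import zify ring lra.
Set Implicit Arguments. Unset Strict Implicit. Unset Printing Implicit Defensive.

(* Call A ⊆ [n] large if its complement has at most (n - |V|)/2 points.  If one
   color contains |E(G)| distinct large sets, assign them to the edges of G: the
   at most two sets at a vertex x share at least |V| points, so the vertices can
   be embedded greedily, giving a monochromatic Berge-G.  Hence every color has
   at most |E(G)| - 1 large sets.  On the other hand every subset of [n] is
   large, has a large complement, or has size in a window of |V| middle layers;
   by C(n, j)^4 (3n + 1) <= 16^n the window holds O(|V| 2^n / n^(1/4)) sets, so
   there are (1 - o(1)) 2^(n-1) large sets. *)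

Lemma exists_sdr_seq (T U : finType) (P : T -> {set U}) (u0 : U) (s : seq T) :
  uniq s -> {in s, forall x, size s <= #|P x|} ->
  exists2 f : T -> U, {in s &, injective f} & {in s, forall x, f x \in P x}.
Proof.
elim: s => [|x s IH] /=; first by exists (fun=> u0).
case/andP=> xNs s_uniq s_small.
have [f f_inj fP] : exists2 f : T -> U, {in s &, injective f} & {in s, forall x, f x \in P x}.
  by apply: IH => // z zs; apply/ltnW/s_small; rewrite inE zs orbT.
have /subsetPn[y yP yNf] : ~~ (P x \subset f @: [set z in s]).
  apply: contraTN (s_small x (mem_head x s)) => /subset_leq_card Px_small.
  rewrite -ltnNge ltnS (leq_trans Px_small) // (leq_trans (leq_imset_card _ _)) //.
  by rewrite cardsE card_size.
have fs z : z \in s -> f z \in f @: [set z in s] by move=> zs; rewrite imset_f ?inE.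
exists (fun z => if z == x then y else f z).
  move=> a b /predU1P[-> | aS] /predU1P[-> | bS]; rewrite ?eqxx //.
  - by case: eqP => [-> // | _ yfb]; case/negP: yNf; rewrite yfb fs.
  - by rewrite (negbTE (memPn xNs a aS)) => fay; case/negP: yNf; rewrite -fay fs.
  - by rewrite (negbTE (memPn xNs a aS)) (negbTE (memPn xNs b bS)); apply: f_inj.
by move=> z /predU1P[-> | zs]; rewrite ?eqxx // (negbTE (memPn xNs z zs)) fP.
Qed.

Lemma exists_sdr (T U : finType) (D : {set T}) (P : T -> {set U}) (u0 : U) :
  {in D, forall x, #|D| <= #|P x|} ->
  exists2 f : T -> U, {in D &, injective f} & {in D, forall x, f x \in P x}.
Proof.
move=> D_small; have [x|f f_inj fP] := @exists_sdr_seq _ _ P u0 (enum D) (enum_uniq D).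
  by rewrite mem_enum -cardE; apply: D_small.
by exists f => [x y xD yD|x xD]; [apply: f_inj | apply: fP]; rewrite mem_enum.
Qed.

Lemma card_bigcup_leq (T I : finType) (P : pred I) (F : I -> {set T}) :
  #|\bigcup_(i | P i) F i| <= \sum_(i | P i) #|F i|.
Proof.
elim/big_rec2: _ => [|i n U _ IH]; first by rewrite cards0.
by rewrite (leq_trans (leq_card_setU _ _)) // leq_add2l.
Qed.

Lemma card_bigcap_geq (T I : finType) (P : pred I) (F : I -> {set T}) :
  #|T| - \sum_(i | P i) #|~: F i| <= #|\bigcap_(i | P i) F i|.
Proof.
have := card_bigcup_leq P (fun i => ~: F i); rewrite -setC_bigcap.
have := cardsC (\bigcap_(i | P i) F i); lia.
Qed.

Lemma mul_bin_central_succ r : r.+1 * 'C(r.+1.*2, r.+1) = 2 * r.*2.+1 * 'C(r.*2, r).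
Proof.
have up := mul_bin_diag r.+1.*2 r; have low := mul_bin_diag r.*2.+1 r.
have sym : 'C(r.*2.+1, r.+1) = 'C(r.*2.+1, r).
  by rewrite -bin_sub; [congr 'C(_, _); lia | lia].
rewrite doubleS /= in up; rewrite /= sym in low.
apply/eqP; rewrite -(eqn_pmul2l (ltn0Sn r)) doubleS -up.
by rewrite mulnCA -low -!mul2n; apply/eqP; ring.
Qed.

Lemma bin_central_sq_bound r : 'C(r.*2, r) ^ 2 * (3 * r + 1) <= 16 ^ r.
Proof.
elim: r => [//|r IH].
have := mul_bin_central_succ r.
set x := 'C(r.*2, r); set y := 'C(r.+1.*2, r.+1) => step.
rewrite -(@leq_pmul2l (r.+1 ^ 2)) ?expn_gt0 //.
have -> : r.+1 ^ 2 * (y ^ 2 * (3 * r.+1 + 1)) = 4 * r.*2.+1 ^ 2 * (3 * r + 4) * x ^ 2.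
  by rewrite mulnA -expnMn step; lia.
have key : 4 * r.*2.+1 ^ 2 * (3 * r + 4) <= 16 * r.+1 ^ 2 * (3 * r + 1) by nia.
apply: (@leq_trans (16 * r.+1 ^ 2 * (3 * r + 1) * x ^ 2)); first by rewrite leq_mul2r key orbT.
have -> : 16 * r.+1 ^ 2 * (3 * r + 1) * x ^ 2 = r.+1 ^ 2 * 16 * (x ^ 2 * (3 * r + 1)) by ring.
apply: leq_trans (leq_mul (leqnn (r.+1 ^ 2 * 16)) IH) _.
by rewrite (expnS 16) mulnA.
Qed.

Lemma bin_sq_le_central n j : 'C(n, j) ^ 2 <= 'C(n.*2, n).
Proof.
have [j_le_n | n_lt_j] := leqP j n; last by rewrite bin_small.
rewrite -addnn -binomial.Vandermonde (bigD1 (Ordinal (j_le_n : j < n.+1))) //=.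
by rewrite bin_sub // -mulnn leq_addr.
Qed.

Lemma bin_pow4_bound n j : 'C(n, j) ^ 4 * (3 * n + 1) <= 16 ^ n.
Proof.
apply: leq_trans _ (bin_central_sq_bound n); rewrite leq_mul2r; apply/orP; right.
by rewrite (expnM _ 2 2) leq_exp2r // bin_sq_le_central.
Qed.

Lemma sum_bin_window_bound n a s q : (s * q) ^ 4 <= 3 * n + 1 ->
  (\sum_(i < s) 'C(n, a + i)) * q <= 2 ^ n.
Proof.
move=> n_large; have [-> | s_gt0] := posnP s; first by rewrite big_ord0.
have term_bound j : 'C(n, j) * (s * q) <= 2 ^ n.
  rewrite -(@leq_exp2r _ _ 4) // expnMn -expnM (mulnC n) expnM.
  by apply: leq_trans _ (bin_pow4_bound n j); rewrite leq_mul2l n_large orbT.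
have : (\sum_(i < s) 'C(n, a + i)) * (s * q) <= \sum_(i < s) 2 ^ n.
  by rewrite big_distrl /=; apply: leq_sum => i _; apply: term_bound.
by rewrite sum_nat_const card_ord mulnCA leq_pmul2l.
Qed.

Definition large_sets n s : {set {set 'I_n}} := [set A | 2 * #|~: A| + s <= n].

Lemma two_pow_le_large_sets_window n s :
  2 ^ n <= 2 * #|large_sets n s| + \sum_(i < s) 'C(n, (n + 1 - s) %/ 2 + i).
Proof.
set L := large_sets n s; set a := (n + 1 - s) %/ 2.
set W := \bigcup_(i < s) [set A : {set 'I_n} | #|A| == a + i].
have cover : [set: {set 'I_n}] \subset L :|: (@setC _) @: L :|: W.
  apply/subsetP => A _; rewrite !in_setU.
  have [AL | ANL] := boolP (A \in L); first by apply/orP; left; apply/orP; left.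
  have [ACL | ACNL] := boolP (~: A \in L); first by rewrite -[A]setCK imset_f ?orbT.
  apply/orP; right; apply/bigcupP.
  (* Neither A nor its complement is large: n + 1 - s <= 2|A| <= n + s - 1. *)
  have := cardsC A; have := max_card A; rewrite card_ord.
  move: ANL ACNL; rewrite /L /large_sets !inE setCK => ANL ACNL A_le_n cardAC.
  have a_bounds : a.*2 <= n + 1 - s <= a.*2.+1.
    by rewrite /a; have := divn_eq (n + 1 - s) 2; have := ltn_pmod (n + 1 - s) (isT : 0 < 2); lia.
  have lt_s : #|A| - a < s by lia.
  have a_le : a <= #|A| by lia.
  by exists (Ordinal lt_s); rewrite // inE /= subnKC.
have card_W : #|W| <= \sum_(i < s) 'C(n, a + i).
  apply: leq_trans (card_bigcup_leq _ _) _.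
  by apply: leq_sum => i _; rewrite card_draws card_ord.
have := subset_leq_card cover; rewrite -powersetT card_powerset cardsT card_ord => /leq_trans; apply.
apply: leq_trans (leq_card_setU _ _) _; rewrite leq_add // mul2n -addnn.
by apply: leq_trans (leq_card_setU _ _) _; rewrite card_imset //; apply: setC_inj.
Qed.

Lemma card_le_color_classes (T : finType) (F : {set T}) k (c : T -> 'I_k) m :
  (forall i, #|F :&: [set A | c A == i]| <= m) -> #|F| <= k * m.
Proof.
move=> class_le.
have -> : F = \bigcup_(i < k) (F :&: [set A | c A == i]).
  apply/setP => A; apply/idP/bigcupP => [AF | [i _ /setIP[] //]].
  by exists (c A); rewrite // !inE AF eqxx.
apply: leq_trans (card_bigcup_leq _ _) _.
by rewrite -[k in _ <= k * _]card_ord -sum_nat_const leq_sum.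
Qed.

Section BergeFreeColorings.

Variables (V : finType) (e : rel V).
Hypotheses (e_sym : symmetric e) (maxdeg : max_deg_le e 2).

Lemma edges_set2 x y : e x y -> [set x; y] \in edges e.
Proof. by move=> exy; apply/imset2P; exists x y; rewrite ?inE. Qed.

Lemma card_bigcap_neighbours n (Q : V -> {set 'I_n}) x : #|V| <= n ->
  (forall y, e x y -> Q y \in large_sets n #|V|) ->
  #|V| <= #|\bigcap_(y | e x y) Q y|.
Proof.
move=> V_le_n Q_large.
have sum_le : \sum_(y | e x y) #|~: Q y| <= n - #|V|.
  rewrite -(leq_pmul2l (isT : 0 < 2)) big_distrr /=.
  apply: (@leq_trans (\sum_(y | e x y) (n - #|V|))).
    by apply: leq_sum => y /Q_large; rewrite /large_sets inE leq_subRL // addnC.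
  by rewrite sum_nat_cond_const leq_mul2r maxdeg orbT.
by apply: leq_trans (card_bigcap_geq _ _); rewrite card_ord; lia.
Qed.

Lemma large_color_class_lt_edges n k (c : {set 'I_n} -> 'I_k) (i : 'I_k) :
  berge_free_coloring e c -> #|V| <= n -> 0 < n ->
  #|large_sets n #|V| :&: [set A | c A == i]| < #|edges e|.
Proof.
move=> c_free V_le_n n_gt0; set C := _ :&: _.
rewrite ltnNge; apply: contra_notN c_free => C_big.
have [psi psi_inj psiC] := @exists_sdr _ _ (edges e) (fun=> C) set0 (fun _ _ => C_big).
have psi_class x y : e x y -> psi [set x; y] \in large_sets n #|V| /\ c (psi [set x; y]) = i.
  by move=> /edges_set2/psiC; rewrite /C inE => /andP[-> /[1!inE] /eqP].
pose P x := \bigcap_(y | e x y) psi [set x; y].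
have P_big x : x \in [set: V] -> #|[set: V]| <= #|P x|.
  by rewrite cardsT => _; apply: card_bigcap_neighbours => // y /psi_class[].
have [phi phi_inj phiP] := exists_sdr (Ordinal n_gt0) P_big.
exists i, phi, psi; split; first by move=> x y; apply: phi_inj; rewrite in_setT.
split=> // x y exy; have [_ c_psi] := psi_class x y exy; split=> //.
  by have /bigcapP := phiP x (in_setT x); apply.
rewrite setUC; have /bigcapP := phiP y (in_setT y); apply; by rewrite e_sym.
Qed.

Lemma card_large_sets_le n k (c : {set 'I_n} -> 'I_k) :
  berge_free_coloring e c -> #|V| <= n -> 0 < n ->
  #|large_sets n #|V| | <= k * (#|edges e| - 1).
Proof.
move=> c_free V_le_n n_gt0; apply: (@card_le_color_classes _ _ _ c) => i.
have lt_edges := large_color_class_lt_edges i c_free V_le_n n_gt0.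
by rewrite subn1 -ltnS prednK // (leq_ltn_trans _ lt_edges).
Qed.

End BergeFreeColorings.

Import Order.TTheory GRing.Theory Num.Theory.
Local Open Scope ring_scope.

Lemma lower_bound_from_counts (R : realFieldType) (eps : R) (P F S k m q : nat) :
  0 < eps -> 1 <= eps * q%:R -> (2 <= m)%N ->
  (2 * P <= 2 * F + S)%N -> (S * q <= 2 * P)%N -> (F <= k * (m - 1))%N ->
  (1 - eps) * (P%:R / (m%:R - 1)) <= k%:R.
Proof.
move=> eps_gt0 eps_q m_ge2 cover window classes.
have m1_gt0 : 0 < m%:R - 1 :> R by rewrite subr_gt0 ltr1n.
rewrite mulrA ler_pdivrMr //.
have {}cover : 2 * P%:R <= 2 * F%:R + S%:R :> R by rewrite -!natrM -natrD ler_nat.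
have {}window : S%:R * q%:R <= 2 * P%:R :> R by rewrite -!natrM ler_nat.
have {}classes : F%:R <= k%:R * (m%:R - 1) :> R.
  by move: classes; rewrite -(ler_nat R) natrM natrB // ltnW.
have S_le : S%:R <= S%:R * (eps * q%:R) :> R by rewrite ler_peMr ?ler0n.
have eps_window : eps * (S%:R * q%:R) <= eps * (2 * P%:R) by rewrite ler_pM2l.
nra.
Qed.

Theorem theorem3 (V : finType) (e : rel V)
  (e_sym : symmetric e) (e_irr : irreflexive e)
  (two_edges : (2 <= #|edges e|)%N)
  (not_2K2 : ~ graph_iso e twoK2)
  (maxdeg : max_deg_le e 2) :
  forall eps : rat, 0 < eps ->
  exists N : nat, forall n : nat, (N <= n)%N ->
    forall (k : nat) (c : {set 'I_n} -> 'I_k),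
      berge_free_coloring e c ->
      (1 - eps) * ((2 ^ n.-1)%N%:R / ((#|edges e|)%:R - 1)) <= (k%:R : rat).
Proof.
move=> eps eps_gt0; set q := Num.bound eps^-1.
have eps_q : 1 <= eps * q%:R.
  have /archi_boundP : 0 <= eps^-1 by rewrite invr_ge0 ltW.
  by rewrite -(ltr_pM2l eps_gt0) mulfV ?gt_eqF // => /ltW.
exists ((#|V| * q) ^ 4 + #|V| + 1)%N => n n_large k c c_free.
have V_le_n : (#|V| <= n)%N by lia.
have n_gt0 : (0 < n)%N by lia.
have pow2n : (2 ^ n = 2 * 2 ^ n.-1)%N by rewrite -expnS prednK.
pose S := (\sum_(i < #|V|) 'C(n, (n + 1 - #|V|) %/ 2 + i))%N.
apply: (@lower_bound_from_counts _ _ _ #|large_sets n #|V| | S _ _ q eps_gt0 eps_q two_edges).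
- by rewrite -pow2n; apply: two_pow_le_large_sets_window.
- by rewrite -pow2n; apply: sum_bin_window_bound; lia.
- exact: (card_large_sets_le e_sym maxdeg c_free V_le_n n_gt0).
Qed.
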